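(* Let $A(\cdot),B(\cdot),C(\cdot)$ be real, piecewise-continuous, $T$-periodic matrix functions (sizes $n\times n$, $n\times m$, $k\times n$) with $(A,B)$ controllable and $(C,A)$ observable, and let $\alpha(\cdot)>0$ be $T$-periodic. Let $P(t)=P(t+T)\succ0$ satisfy $$\dot P(t)= A(t)P(t)+P(t)A(t)^\top+\alpha(t)P(t)+\frac{1}{\alpha(t)}B(t)B(t)^\top,$$ and let $Q(t)=Q(t+T)\succ0$ satisfy $$-\dot Q(t)=Q(t)A(t)+A(t)^\top Q(t)+\alpha(t)Q(t)+C(t)^\top C(t).$$ Then $$\operatorname{size}(\mathcal{E}_\alpha)=\frac1T\int_0^T\frac{\mathrm{trace}\big(B(t)^\top Q(t)B(t)\big)}{\alpha(t)}\,dt.$$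
   Context: $\mathcal{E}_\alpha(t)=\{\mathrm{x}\in\mathbb{R}^n:\mathrm{x}^\top P(t)^{-1}\mathrm{x}\le1\}$ is the minimal periodic inescapable ellipsoid associated with $\alpha$ for the system $\dot x=A(t)x+B(t)w$, $z=C(t)x$, $\|w(t)\|\le1$, where $P$ is the periodic solution above. Its size is defined as $\operatorname{size}(\mathcal{E}_\alpha)=\frac1T\int_0^T\mathrm{trace}\big(C(t)P(t)C(t)^\top\big)\,dt$. *)

From HB Require Import structures.
From mathcomp Require Import all_boot all_order all_algebra.
From mathcomp Require Import all_classical all_reals all_analysis.
Set Implicit Arguments. Unset Strict Implicit. Unset Printing Implicit Defensive.
Import Order.TTheory GRing.Theory Num.Theory.
Import numFieldNormedType.Exports.
Local Open Scope classical_set_scope.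
Local Open Scope ring_scope.

Section Defs.
Variable R : realType.

Definition pw_continuous (f : R -> R) : Prop :=
  (forall a b : R, exists s : seq R,
      forall x, a <= x <= b -> x \notin s -> {for x, continuous f}) /\
  (forall x : R, cvg (f @ x^'-) /\ cvg (f @ x^'+)).

Definition pw_continuous_mx (p q : nat) (F : R -> 'M[R]_(p, q)) : Prop :=
  forall i j, pw_continuous (fun t => F t i j).

Definition periodic_fun (X : Type) (T : R) (F : R -> X) : Prop :=
  forall t, F (t + T) = F t.

Definition mx_solution_on (p q : nat) (F G : R -> 'M[R]_(p, q)) (t0 t1 : R)
  : Prop :=
  (forall i j, {within `[t0, t1], continuous (fun t => F t i j)}) /\
  exists s : seq R, forall t, t0 < t < t1 -> t \notin s ->
    forall i j, is_derive t (1 : R) (fun r => F r i j) (G t i j).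

Definition mx_solution (p q : nat) (F G : R -> 'M[R]_(p, q)) : Prop :=
  forall t0 t1, t0 <= t1 -> mx_solution_on F G t0 t1.

Definition controllable (n m : nat) (A : R -> 'M[R]_n) (B : R -> 'M[R]_(n, m))
  : Prop :=
  forall (t0 : R) (x0 x1 : 'cV[R]_n), exists t1, t0 < t1 /\
    exists (u : R -> 'cV[R]_m) (x : R -> 'cV[R]_n),
      pw_continuous_mx u /\ x t0 = x0 /\ x t1 = x1 /\
      mx_solution_on x (fun t => A t *m x t + B t *m u t) t0 t1.

(* Observability of  x' = A(t) x, z = C(t) x : for every initial time t0
   there is t1 > t0 such that the output on [t0, t1] determines x(t0)
   (equivalently, zero output forces zero initial state). *)
Definition observable (n k : nat) (C : R -> 'M[R]_(k, n)) (A : R -> 'M[R]_n)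
  : Prop :=
  forall t0 : R, exists t1, t0 < t1 /\
    forall x : R -> 'cV[R]_n,
      mx_solution_on x (fun t => A t *m x t) t0 t1 ->
      (forall t, t0 <= t <= t1 -> C t *m x t = 0) -> x t0 = 0.

Definition posdef (n : nat) (M : 'M[R]_n) : Prop :=
  M^T = M /\ forall x : 'cV[R]_n, x != 0 -> 0 < (x^T *m M *m x) 0 0.

Definition ellipsoid_size (n k : nat) (T : R) (C : R -> 'M[R]_(k, n))
  (P : R -> 'M[R]_n) : R :=
  T^-1 * \int[lebesgue_measure]_(t in `[0, T]) \tr (C t *m P t *m (C t)^T).

End Defs.

(* Let h(t) = tr(Q(t) P(t)).  Differentiating with the two matrix equations,
   the A- and alpha-terms cancel by cyclicity of the trace, leaving
     h' = tr(B^T Q B) / alpha - tr(C P C^T)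
   away from the finitely many points per period where the data jump.  Both
   terms are nonnegative, so integrating over one period (in the extended
   reals, with monotone convergence near the jumps) gives
     int tr(B^T Q B) / alpha + h(0) = int tr(C P C^T) + h(T),
   and h(T) = h(0) by periodicity of P and Q. *)

From HB Require Import structures.
From mathcomp Require Import all_boot all_order all_algebra.
From mathcomp Require Import all_classical all_reals all_analysis.
From mathcomp Require Import ring lra.
From mathcomp Require Import measurable_realfun.
Import Order.TTheory GRing.Theory Num.Theory.
Import numFieldNormedType.Exports.
Local Open Scope classical_set_scope.
Local Open Scope ring_scope.

Set Implicit Arguments.
Unset Strict Implicit.
Unset Printing Implicit Defensive.

Section IntervalFTC.
Variable R : realType.
Local Notation mu := (@lebesgue_measure R).

Lemma cvg_addr_harmonic (a k : R) : (a + k * harmonic n) @[n --> \oo] --> a.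
Proof.
rewrite -[X in _ --> X]addr0 -(mulr0 k).
exact: cvgD (cvg_cst _) (cvgM (cvg_cst _) cvg_harmonic).
Qed.

Lemma itv_split_ind (good : R -> Prop) (Phi : R -> R -> Prop) :
  (forall a b, a < b -> (forall x, a < x < b -> good x) -> Phi a b) ->
  (forall a p b, a < p -> p < b -> Phi a p -> Phi p b -> Phi a b) ->
  forall (s : seq R) a b, a < b ->
  (forall x, a < x < b -> x \notin s -> good x) -> Phi a b.
Proof.
move=> base step; elim=> [|p s IH] a b ab good_ab.
  by apply: base => // x /good_ab; apply.
have good_s x : a < x < b -> x != p -> x \notin s -> good x.
  by move=> xab xp xs; apply: good_ab; rewrite // in_cons negb_or xp.
have [/andP[ap pb]|pNab] := boolP (a < p < b); last first.
  apply: IH => // x xab; apply: good_s => //.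
  by apply: contraNneq pNab => <-.
apply: (step a p b) => //; apply: IH => // x /andP[ax xb]; apply: good_s.
- by rewrite ax (lt_trans xb).
- by rewrite lt_eqF.
- by rewrite (lt_trans ap ax) xb.
- by rewrite gt_eqF.
Qed.

Lemma integral_cc_FTC (f g h : R -> R) (a b : R) : a < b ->
  {within `[a, b], continuous f} -> {within `[a, b], continuous g} ->
  {within `[a, b], continuous h} ->
  (forall x, a < x < b -> is_derive x 1 h (g x - f x)) ->
  (\int[mu]_(x in `[a, b]) (g x)%:E + (h a)%:E =
   \int[mu]_(x in `[a, b]) (f x)%:E + (h b)%:E)%E.
Proof.
move=> ab cf cg ch dh.
have [if_ ig] : mu.-integrable `[a, b] (EFin \o f) /\
                mu.-integrable `[a, b] (EFin \o g).
  by split; apply: continuous_compact_integrable => //; exact: segment_compact.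
have h_LR : derivable_oo_LRcontinuous h a b.
  have [_ ha hb] := (continuous_within_itvP h ab).1 ch.
  by split=> // x; rewrite in_itv => /dh [].
have h' : {in `]a, b[, h^`()%classic =1 (fun x => g x - f x)}.
  by move=> x; rewrite in_itv => /dh dhx; rewrite derive1E derive_val.
have cgf : {within `[a, b], continuous (fun x => g x - f x)}.
  by move=> x; apply: cvgB; [exact: cg|exact: cf].
have := continuous_FTC2 ab cgf h_LR h'.
rewrite integralB_EFin //.
have fin_f : (\int[mu]_(x in `[a, b]) (f x)%:E)%E \is a fin_num.
  exact: integrable_fin_num if_.
have fin_g : (\int[mu]_(x in `[a, b]) (g x)%:E)%E \is a fin_num.
  exact: integrable_fin_num ig.
rewrite -(fineK fin_f) -(fineK fin_g).
rewrite -!EFinB -!EFinD => vu; congr EFin; have := EFin_inj vu; lra.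
Qed.

Section OpenItv.
Variables (c d : R).
Hypothesis cd : c < d.

Let e := (d - c) / 3.
Let cn n := c + e * harmonic n.
Let dn n := d - e * harmonic n.

Let e_gt0 : 0 < e. Proof. by rewrite divr_gt0 // subr_gt0. Qed.

Let cn_gt n : c < cn n.
Proof. by rewrite ltrDl mulr_gt0 // harmonic_gt0. Qed.

Let dn_lt n : dn n < d.
Proof. by rewrite ltrBlDr ltrDl mulr_gt0 // harmonic_gt0. Qed.

Let cn_lt_dn n : cn n < dn n.
Proof.
have eh : e * harmonic n <= e by rewrite ler_piMr ?invf_le1 ?ler1n // ltW.
have e3 : 3 * e = d - c by rewrite /e mulrC divfK.
have := e_gt0; rewrite /cn /dn; lra.
Qed.

Let inner n := `[cn n, dn n]%classic : set R.

Let inner_sub n : inner n `<=` `]c, d[.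
Proof.
move=> x; rewrite /inner /= !in_itv /= => /andP[cx xd].
by rewrite (lt_le_trans (cn_gt n)) // (le_lt_trans xd (dn_lt n)).
Qed.

Let inner_nondecreasing : {homo inner : n m / (n <= m)%N >-> (n <= m)%O}.
Proof.
move=> n m nm; rewrite subsetEset => x; rewrite /inner /= !in_itv /=.
have hnm : harmonic m <= harmonic n :> R.
  by rewrite lef_pV2 ?posrE // ler_nat.
have ehnm : e * harmonic m <= e * harmonic n by rewrite ler_wpM2l // ltW.
rewrite /cn /dn; move=> /andP[? ?]; apply/andP; split; lra.
Qed.

Let bigcup_inner : \bigcup_n inner n = `]c, d[%classic.
Proof.
apply/seteqP; split; first by move=> x [n _]; exact: inner_sub.
move=> x /=; rewrite in_itv /= => /andP[cx xd].
have m0 : 0 < Num.min (x - c) (d - x) by rewrite lt_min !subr_gt0 cx xd.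
have /cvgrPdist_le /(_ _ m0) [N _ HN] := @cvg_addr_harmonic 0 e.
have eh0 : 0 <= e * harmonic N by rewrite ltW // mulr_gt0 // harmonic_gt0.
exists N => //; have := HN N (leqnn N).
rewrite sub0r normrN add0r ger0_norm //.
rewrite /inner /= in_itv /= /cn /dn; move: (e * harmonic N) => eh.
by rewrite le_min => /andP[? ?]; apply/andP; split; lra.
Qed.

Lemma ge0_integral_oo_FTC (f g h : R -> R) :
  (forall x, 0 <= f x) -> (forall x, 0 <= g x) ->
  {for c, continuous h} -> {for d, continuous h} ->
  (forall x, c < x < d -> [/\ {for x, continuous f}, {for x, continuous g} &
                             is_derive x 1 h (g x - f x)]) ->
  [/\ measurable_fun `[c, d] f, measurable_fun `[c, d] g &
   (\int[mu]_(x in `[c, d]) (g x)%:E + (h c)%:E =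
    \int[mu]_(x in `[c, d]) (f x)%:E + (h d)%:E)%E].
Proof.
(* FTC on [c, d] itself would need f and g continuous up to the endpoints;
   instead exhaust ]c, d[ by the compact intervals [cn n, dn n] and pass to
   the limit by monotone convergence, which is where f, g >= 0 is used. *)
move=> f0 g0 hc hd good.
have cont_oo (u : R -> R) : (forall x, c < x < d -> {for x, continuous u}) ->
    measurable_fun `]c, d[ u /\ forall n, {within `[cn n, dn n], continuous u}.
  move=> cu; split.
    by apply: open_continuous_measurable_fun => // x; rewrite inE /= in_itv => /cu.
  move=> n; apply: continuous_in_subspaceT => x /set_mem /inner_sub.
  by rewrite /= in_itv => /cu.
have cf x : c < x < d -> {for x, continuous f} by case/good.
have cg x : c < x < d -> {for x, continuous g} by case/good.
have [mfo cfn] := cont_oo f cf.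
have [mgo cgn] := cont_oo g cg.
have mf : measurable_fun `[c, d] f by exact: measurable_fun_itv_cc mfo.
have mg : measurable_fun `[c, d] g by exact: measurable_fun_itv_cc mgo.
split => //.
have chn n : {within `[cn n, dn n], continuous h}.
  apply: derivable_within_continuous => x /inner_sub.
  by rewrite /= in_itv => /good [_ _ []].
have eqn n : (\int[mu]_(x in inner n) (g x)%:E + (h (cn n))%:E =
              \int[mu]_(x in inner n) (f x)%:E + (h (dn n))%:E)%E.
  apply: integral_cc_FTC (cn_lt_dn n) (cfn n) (cgn n) (chn n) _ => x /andP[cnx xdn].
  have /good[] // : c < x < d.
  by rewrite (lt_trans (cn_gt n) cnx) (lt_trans xdn (dn_lt n)).
have lim_int (u : R -> R) : (forall x, 0 <= u x) -> measurable_fun `]c, d[ u ->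
    (\int[mu]_(x in inner n) (u x)%:E @[n --> \oo] -->
     \int[mu]_(x in `[c, d]) (u x)%:E)%E.
  move=> u0 mu_oo.
  rewrite (@integral_itv_bndoo _ c d _ true false); last exact/measurable_EFinP.
  rewrite -bigcup_inner; apply: ge0_nondecreasing_set_cvg_integral => //.
  - by move=> n; exact: measurable_itv.
  - by move=> n; apply/measurable_EFinP; exact: measurable_funS mu_oo.
  - by move=> n x _; rewrite lee_fin.
have lim_hc : (h (cn n))%:E @[n --> \oo] --> (h c)%:E.
  by apply: cvg_EFin; [exact: nearW|exact: continuous_cvg hc (@cvg_addr_harmonic c e)].
have lim_hd : (h (dn n))%:E @[n --> \oo] --> (h d)%:E.
  apply: cvg_EFin; [exact: nearW|apply: continuous_cvg hd _].
  have -> : dn = fun n => d + - e * harmonic n by apply/funext => n; rewrite mulNr.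
  exact: cvg_addr_harmonic.
have lim_sum (u : R -> R) (x : R) (y : nat -> R) :
    (\int[mu]_(x in inner n) (u x)%:E @[n --> \oo] --> \int[mu]_(x in `[c, d]) (u x)%:E)%E ->
    (y n)%:E @[n --> \oo] --> x%:E ->
    (\int[mu]_(x in inner n) (u x)%:E + (y n)%:E @[n --> \oo] -->
     \int[mu]_(x in `[c, d]) (u x)%:E + x%:E)%E.
  by move=> ? ?; apply: cvgeD => //; exact: fin_num_adde_defl.
have := lim_sum g _ _ (lim_int g g0 mgo) lim_hc.
rewrite (funext eqn) => /(cvg_unique (@ereal_hausdorff R)); apply.
exact: lim_sum (lim_int f f0 mfo) lim_hd.
Qed.
End OpenItv.

Lemma itv_cc_setU (a p b : R) : a <= p <= b ->
  `[a, b]%classic = `[a, p]%classic `|` `]p, b]%classic.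
Proof.
move=> /andP[ap pb]; apply/seteqP; split => x /=; rewrite !in_itv /=.
  by case/andP=> ax xb; case: (leP x p) => xp; [left|right]; rewrite ?ax ?xb ?xp.
by case=> /andP[? ?]; apply/andP; split; lra.
Qed.

Lemma measurable_fun_itv_cc_split (f : R -> R) (a p b : R) : a <= p <= b ->
  measurable_fun `[a, p] f -> measurable_fun `[p, b] f ->
  measurable_fun `[a, b] f.
Proof.
move=> apb mf1 mf2; rewrite (itv_cc_setU apb); apply/measurable_funU => //.
split => //; apply: measurable_funS mf2 => //.
by apply: subset_itvr; rewrite bnd_simp.
Qed.

Lemma ge0_integral_itv_cc_split (f : R -> R) (a p b : R) : a <= p <= b ->
  (forall x, 0 <= f x) -> measurable_fun `[a, b] f ->
  (\int[mu]_(x in `[a, b]) (f x)%:E =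
   \int[mu]_(x in `[a, p]) (f x)%:E + \int[mu]_(x in `[p, b]) (f x)%:E)%E.
Proof.
move=> apb f0 mf; rewrite (itv_cc_setU apb) ge0_integral_setU //=.
- rewrite (@integral_itv_obnd_cbnd _ p (BRight b)) //.
  by apply/measurable_EFinP; apply: measurable_funS mf => //; rewrite (itv_cc_setU apb); right.
- by rewrite -(itv_cc_setU apb); exact/measurable_EFinP.
- by move=> x _; rewrite lee_fin.
- rewrite disj_set2E; apply/eqP/seteqP; split => // x /= [].
  by rewrite !in_itv /= => /andP[_ xp] /andP[px _]; lra.
Qed.

Lemma ge0_integral_pw_FTC (f g h : R -> R) (s : seq R) (a b : R) : a < b ->
  (forall x, 0 <= f x) -> (forall x, 0 <= g x) ->
  (forall x, {for x, continuous h}) ->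
  (forall x, a < x < b -> x \notin s ->
     [/\ {for x, continuous f}, {for x, continuous g} &
         is_derive x 1 h (g x - f x)]) ->
  (\int[mu]_(x in `[a, b]) (g x)%:E + (h a)%:E =
   \int[mu]_(x in `[a, b]) (f x)%:E + (h b)%:E)%E.
Proof.
move=> ab f0 g0 hc good.
suff [] : [/\ measurable_fun `[a, b] f, measurable_fun `[a, b] g &
  (\int[mu]_(x in `[a, b]) (g x)%:E + (h a)%:E =
   \int[mu]_(x in `[a, b]) (f x)%:E + (h b)%:E)%E] by [].
move: s a b ab good; apply: itv_split_ind => [a b ab|a p b ap pb].
  by move=> good; apply: ge0_integral_oo_FTC.
have apb : a <= p <= b by rewrite !ltW.
move=> [mf1 mg1 E1] [mf2 mg2 E2].
have mf := measurable_fun_itv_cc_split apb mf1 mf2.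
have mg := measurable_fun_itv_cc_split apb mg1 mg2.
split => //; rewrite !(ge0_integral_itv_cc_split apb) //.
by rewrite addeAC E1 addeAC -addeA E2 addeA.
Qed.

End IntervalFTC.

Section MatrixCalculus.
Variable R : realType.

Definition mx_continuous_at (p q : nat) (M : R -> 'M[R]_(p, q)) (x : R) :=
  forall i j, {for x, continuous (fun t => M t i j)}.

Definition mx_is_derive (p q : nat) (M : R -> 'M[R]_(p, q)) (x : R)
    (dM : 'M[R]_(p, q)) :=
  forall i j, is_derive x 1 (fun t => M t i j) (dM i j).

Lemma continuous_sum (I : Type) (r : seq I) (F : I -> R -> R) (x : R) :
  (forall i, {for x, continuous (F i)}) ->
  {for x, continuous (fun t => \sum_(i <- r) F i t)}.
Proof.
move=> cF; rewrite -fct_sumE; apply: (big_ind (fun u => {for x, continuous u})).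
- exact: cst_continuous.
- by move=> u v; exact: continuousD.
- by move=> i _; exact: cF.
Qed.

Lemma mx_continuous_at_mul (p q r : nat) (M : R -> 'M[R]_(p, q))
    (N : R -> 'M[R]_(q, r)) (x : R) :
  mx_continuous_at M x -> mx_continuous_at N x ->
  mx_continuous_at (fun t => M t *m N t) x.
Proof.
move=> cM cN i j.
have -> : (fun t => (M t *m N t) i j) = (fun t => \sum_l M t i l * N t l j).
  by apply/funext => t; rewrite mxE.
by apply: continuous_sum => l; apply: continuousM.
Qed.

Lemma mx_continuous_at_tr (p q : nat) (M : R -> 'M[R]_(p, q)) (x : R) :
  mx_continuous_at M x -> mx_continuous_at (fun t => (M t)^T) x.
Proof.
move=> cM i j.
by have -> : (fun t => (M t)^T i j) = (fun t => M t j i) by apply/funext => t; rewrite mxE.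
Qed.

Lemma continuous_mxtrace (p : nat) (M : R -> 'M[R]_p) (x : R) :
  mx_continuous_at M x -> {for x, continuous (fun t => \tr (M t))}.
Proof. by move=> cM; apply: continuous_sum => i; exact: cM. Qed.

Lemma mx_is_deriveM (p q r : nat) (M : R -> 'M[R]_(p, q))
    (N : R -> 'M[R]_(q, r)) (x : R) dM dN :
  mx_is_derive M x dM -> mx_is_derive N x dN ->
  mx_is_derive (fun t => M t *m N t) x (dM *m N x + M x *m dN).
Proof.
move=> DM DN i j.
have -> : (fun t => (M t *m N t) i j) = \sum_l (fun t => M t i l * N t l j).
  by apply/funext => t; rewrite fct_sumE mxE.
have -> : (dM *m N x + M x *m dN) i j =
          \sum_l (M x i l *: dN l j + N x l j *: dM i l).
  rewrite !mxE big_split /= addrC; congr (_ + _); apply: eq_bigr => l _.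
  by rewrite mulrC.
by apply: is_derive_sum => l; exact: is_deriveM (DM i l) (DN l j).
Qed.

Lemma is_derive_mxtrace (p : nat) (M : R -> 'M[R]_p) (x : R) dM :
  mx_is_derive M x dM -> is_derive x 1 (fun t => \tr (M t)) (\tr dM).
Proof. by move=> DM; rewrite /mxtrace -fct_sumE; apply: is_derive_sum. Qed.

Lemma mx_solution_continuous_at (p q : nat) (M dM : R -> 'M[R]_(p, q)) (x : R) :
  mx_solution M dM -> mx_continuous_at M x.
Proof.
move=> solM i j; have x_lt : x - 1 < x + 1 by lra.
have [cM _] := solM _ _ (ltW x_lt).
have [cM_oo _ _] := (continuous_within_itvP _ x_lt).1 (cM i j).
by apply: cM_oo; rewrite in_itv /=; apply/andP; split; lra.
Qed.

Lemma mxtrace_quad_ge0 (p q : nat) (M : 'M[R]_(p, q)) (Q : 'M[R]_p) :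
  posdef Q -> 0 <= \tr (M^T *m Q *m M).
Proof.
move=> [_ Qpos]; apply: sumr_ge0 => i _.
have -> : (M^T *m Q *m M) i i = ((col i M)^T *m Q *m col i M) 0 0.
  rewrite !mxE; apply: eq_bigr => l _; rewrite !mxE; congr (_ * _).
  by apply: eq_bigr => l' _; rewrite !mxE.
have [->|Mi_neq0] := eqVneq (col i M) 0; first by rewrite mulmx0 mxE.
exact/ltW/Qpos.
Qed.

End MatrixCalculus.

Lemma mxtrace_lyapunov_pair (F : fieldType) (n m k : nat) (A Q P : 'M[F]_n)
    (B : 'M[F]_(n, m)) (C : 'M[F]_(k, n)) (a : F) :
  \tr ((- (Q *m A + A^T *m Q + a *: Q + C^T *m C)) *m P +
       Q *m (A *m P + P *m A^T + a *: P + a^-1 *: (B *m B^T))) =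
  \tr (B^T *m Q *m B) / a - \tr (C *m P *m C^T).
Proof.
rewrite mulNmx !mulmxDl !mulmxDr -!scalemxAl -!scalemxAr.
rewrite !raddfD /= !raddfN /= !mxtraceZ.
have -> : \tr (Q *m (A *m P)) = \tr (Q *m A *m P) by rewrite mulmxA.
have -> : \tr (Q *m (P *m A^T)) = \tr (A^T *m Q *m P).
  by rewrite mulmxA mxtrace_mulC mulmxA.
have -> : \tr (C^T *m C *m P) = \tr (C *m P *m C^T).
  by rewrite -mulmxA mxtrace_mulC.
have -> : \tr (Q *m (B *m B^T)) = \tr (B^T *m Q *m B).
  by rewrite mulmxA mxtrace_mulC mulmxA.
ring.
Qed.

Lemma finite_exceptions (I : finType) (T : eqType) (P : I -> T -> Prop) :
  (forall i, exists s : seq T, forall x, x \notin s -> P i x) ->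
  exists s : seq T, forall x, x \notin s -> forall i, P i x.
Proof.
move=> /fin_all_exists [s Ps]; exists (flatten [seq s i | i <- enum I]).
move=> x xNs i; apply: Ps; apply: contra xNs => xsi.
by apply/flattenP; exists (s i); rewrite ?map_f ?mem_enum.
Qed.

Lemma pw_continuous_mx_exceptions (R : realType) (p q : nat)
    (M : R -> 'M[R]_(p, q)) (a b : R) :
  pw_continuous_mx M ->
  exists s : seq R, forall x, a <= x <= b -> x \notin s -> mx_continuous_at M x.
Proof.
move=> pwM.
have [s Ms] : exists s : seq R, forall x, x \notin s -> forall ij : 'I_p * 'I_q,
    a <= x <= b -> {for x, continuous (fun t => M t ij.1 ij.2)}.
  apply: finite_exceptions => -[i j]; have [s Ms] := (pwM i j).1 a b.
  by exists s => x xs xab; exact: Ms.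
by exists s => x xab xs i j; exact: (Ms x xs (i, j)).
Qed.

Lemma is_derive_mxtrace_lyapunov_pair (R : realType) (n m k : nat)
    (A : 'M[R]_n) (B : 'M[R]_(n, m)) (C : 'M[R]_(k, n)) (a : R)
    (P Q : R -> 'M[R]_n) (x : R) :
  mx_is_derive P x (A *m P x + P x *m A^T + a *: P x + a^-1 *: (B *m B^T)) ->
  mx_is_derive Q x (- (Q x *m A + A^T *m Q x + a *: Q x + C^T *m C)) ->
  is_derive x 1 (fun t => \tr (Q t *m P t))
    (\tr (B^T *m Q x *m B) / a - \tr (C *m P x *m C^T)).
Proof.
by move=> dP dQ; rewrite -(mxtrace_lyapunov_pair A); exact/is_derive_mxtrace/mx_is_deriveM.
Qed.

Theorem theorem2 (R : realType) (n m k : nat) (T : R)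
  (A : R -> 'M[R]_n) (B : R -> 'M[R]_(n, m)) (C : R -> 'M[R]_(k, n))
  (alpha : R -> R) (P Q : R -> 'M[R]_n) :
  0 < T ->
  pw_continuous_mx A -> pw_continuous_mx B -> pw_continuous_mx C ->
  periodic_fun T A -> periodic_fun T B -> periodic_fun T C ->
  controllable A B -> observable C A ->
  (forall t, 0 < alpha t) -> periodic_fun T alpha -> pw_continuous alpha ->
  periodic_fun T P -> (forall t, posdef (P t)) ->
  mx_solution P (fun t => A t *m P t + P t *m (A t)^T + alpha t *: P t
                          + (alpha t)^-1 *: (B t *m (B t)^T)) ->
  periodic_fun T Q -> (forall t, posdef (Q t)) ->
  mx_solution Q (fun t => - (Q t *m A t + (A t)^T *m Q t + alpha t *: Q t
                             + (C t)^T *m C t)) ->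
  ellipsoid_size T C P =
    T^-1 * \int[lebesgue_measure]_(t in `[0, T])
             (\tr ((B t)^T *m Q t *m B t) / alpha t).
Proof.
(* Controllability, observability and the periodicity of A, B, C and alpha
   only serve to make P and Q exist; the identity needs none of them. *)
move=> T_gt0 _ pwB pwC _ _ _ _ _ alpha_gt0 _ pw_alpha perP Ppos solP perQ Qpos solQ.
pose f t := \tr (C t *m P t *m (C t)^T).
pose g t := \tr ((B t)^T *m Q t *m B t) / alpha t.
pose h t := \tr (Q t *m P t).
have cP t : mx_continuous_at P t := mx_solution_continuous_at solP.
have cQ t : mx_continuous_at Q t := mx_solution_continuous_at solQ.
have f_ge0 t : 0 <= f t by have := mxtrace_quad_ge0 (C t)^T (Ppos t); rewrite trmxK.
have g_ge0 t : 0 <= g t by apply: divr_ge0; [exact: mxtrace_quad_ge0|exact: ltW].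
have h_cont t : {for t, continuous h}.
  exact/continuous_mxtrace/mx_continuous_at_mul.
have [sP dP] := (solP 0 T (ltW T_gt0)).2.
have [sQ dQ] := (solQ 0 T (ltW T_gt0)).2.
have [sB cB] := pw_continuous_mx_exceptions 0 T pwB.
have [sC cC] := pw_continuous_mx_exceptions 0 T pwC.
have [sa ca] := pw_alpha.1 0 T.
have good t : 0 < t < T -> t \notin sP ++ sQ ++ sB ++ sC ++ sa ->
    [/\ {for t, continuous f}, {for t, continuous g} & is_derive t 1 h (g t - f t)].
  move=> tT; rewrite !mem_cat !negb_or => /and5P[tP tQ tB tC ta].
  have tT' : 0 <= t <= T by case/andP: tT => *; rewrite !ltW.
  have cBt := cB t tT' tB; have cCt := cC t tT' tC.
  split.
  - apply/continuous_mxtrace/mx_continuous_at_mul/mx_continuous_at_tr => //.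
    exact: mx_continuous_at_mul.
  - apply: continuousM; last by apply: continuousV; [rewrite gt_eqF|exact: ca].
    apply/continuous_mxtrace/mx_continuous_at_mul => //.
    exact/mx_continuous_at_mul/cQ/mx_continuous_at_tr.
  - exact: is_derive_mxtrace_lyapunov_pair (dP t tT tP) (dQ t tT tQ).
have := ge0_integral_pw_FTC T_gt0 f_ge0 g_ge0 h_cont good.
have -> : h T = h 0 by rewrite /h -[T]add0r perP perQ.
move=> /(congr1 (fun z => z - (h 0)%:E)%E); rewrite !addeK // => E.
by rewrite /ellipsoid_size /Rintegral E.
Qed.
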